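(* Let $0<\varepsilon<|B|$, $r>0$, $r_{\max}=r\sqrt{\log(|B|/\varepsilon)}$, and for $c\in\mathbb{R}^d$ let $K'_c(x)=K_c(x)$ if $\|x-c\|\le r_{\max}$ and $K'_c(x)=0$ otherwise. Then for every center $c\in\mathbb{R}^d$, \[ |\Phi(K_c)-\Phi(K'_c)|\le\varepsilon. \]
   Context: $B\subset\mathbb{R}^d$ finite nonempty, $m:B\to\{0,1\}$, $M=\{x\in B:m(x)=1\}$. Gaussian kernel with center $c$ and bandwidth $r$: $K_c(x)=\exp(-\|x-c\|^2/r^2)$. For $p,q\in[0,1]$ and $K:B\to[0,1]$: $g(x)=pK(x)+q(1-K(x))$, $\ell(p,q,K)=\frac{1}{|B|}\big(\sum_{x\in M}\log g(x)+\sum_{x\in B\setminus M}\log(1-g(x))\big)$ ($\log 0=-\infty$), $\ell_0(q)=\frac1{|B|}(|M|\log q+|B\setminus M|\log(1-q))$, and $\Phi(K)=\max_{p,q\in[0,1]}\ell(p,q,K)-\max_{q\in[0,1]}\ell_0(q)$. Standing assumption: the maximizer $(p^*,q^* )$ of $\ell(\cdot,\cdot,K)$ lies in $(0,1)^2$ with finite value. *)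

(* classical reals. Points of R^d are lists of reals of length d. *)
From Stdlib Require Import Reals Lra List.
Import ListNotations.
Open Scope R_scope.

Definition point := list R.

Definition sqdist (x c : point) : R :=
  fold_right Rplus 0 (map (fun ab => (fst ab - snd ab) ^ 2) (combine x c)).

Definition dist (x c : point) : R := sqrt (sqdist x c).

(* sum over the finite set B (given as a duplicate-free list) *)
Definition sumB (B : list point) (f : point -> R) : R :=
  fold_right Rplus 0 (map f B).

Definition gaussK (r : R) (c : point) (x : point) : R :=
  exp (- sqdist x c / r ^ 2).

Definition truncK (r rmax : R) (c : point) (x : point) : R :=
  if Rle_dec (dist x c) rmax then gaussK r c x else 0.

Definition gfun (p q : R) (K : point -> R) (x : point) : R :=
  p * K x + q * (1 - K x).

(* l(p,q,K) is finite (all log arguments positive) *)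
Definition ell_finite (B : list point) (m : point -> bool) (p q : R)
  (K : point -> R) : Prop :=
  forall x, In x B -> if m x then 0 < gfun p q K x else gfun p q K x < 1.

(* value of l(p,q,K) when finite *)
Definition ell (B : list point) (m : point -> bool) (p q : R) (K : point -> R) : R :=
  / INR (length B) *
  sumB B (fun x => if m x then ln (gfun p q K x) else ln (1 - gfun p q K x)).

Definition ell0_finite (B : list point) (m : point -> bool) (q : R) : Prop :=
  forall x, In x B -> if m x then 0 < q else q < 1.

Definition ell0 (B : list point) (m : point -> bool) (q : R) : R :=
  / INR (length B) * sumB B (fun x => if m x then ln q else ln (1 - q)).

Definition in01 (t : R) : Prop := 0 <= t <= 1.

(* L is max_{p,q in [0,1]} l(p,q,K) (finite value attained; -infinity values
   of l are simply dominated) *)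
Definition IsMaxEll (B : list point) (m : point -> bool) (K : point -> R) (L : R) : Prop :=
  (exists p q, in01 p /\ in01 q /\ ell_finite B m p q K /\ ell B m p q K = L) /\
  (forall p q, in01 p -> in01 q -> ell_finite B m p q K -> ell B m p q K <= L).

Definition IsMaxEll0 (B : list point) (m : point -> bool) (L0 : R) : Prop :=
  (exists q, in01 q /\ ell0_finite B m q /\ ell0 B m q = L0) /\
  (forall q, in01 q -> ell0_finite B m q -> ell0 B m q <= L0).

Definition IsPhi (B : list point) (m : point -> bool) (K : point -> R) (v : R) : Prop :=
  exists L L0, IsMaxEll B m K L /\ IsMaxEll0 B m L0 /\ v = L - L0.

Definition StandingAssumption (B : list point) (m : point -> bool) (K : point -> R) : Prop :=
  exists p q, 0 < p < 1 /\ 0 < q < 1 /\ ell_finite B m p q K /\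
    (forall p' q', in01 p' -> in01 q' -> ell_finite B m p' q' K ->
       ell B m p' q' K <= ell B m p q K).

From Pilot Require Import Defs.
From Stdlib Require Import Reals List Lra Psatz.
Open Scope R_scope.

(* Write n = |B| and t = eps/n.  Outside the ball of radius
   rmax = r sqrt(ln(n/eps)) the Gaussian kernel is below t, so the truncated
   kernel K' agrees with K on B except at points where K < t, where K' = 0
   ("K' is a t-truncation of K", [IsTruncation]).  Both Phi values share the
   null term max l0, so only the two maxima of l have to be compared.

   The basic tool is [ell_compare]: if the success and failure probabilities
   of one model dominate c times those of another at every point of B, the
   log-likelihoods differ by at least ln c.  Moving a maximizer (p,q) of one
   kernel to a suitable parameter pair for the other kernel gives
     max l(K') + ln(1-t) <= max l(K)   and   max l(K) - ln(1+t) <= max l(K').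
   The second bound yields Phi(K) - Phi(K') <= ln(1+t) <= t <= eps; the first
   gives Phi(K') - Phi(K) <= -ln(1-t) <= eps/(n-eps) <= eps when eps <= n-1;
   otherwise Phi(K') - Phi(K) <= max l(K') - max l0 <= -max l0, which is at
   most ln 2 <= 1 <= eps (if eps >= 1) or 0 (if n = 1).  This gives
   [phi_truncation_bound] for arbitrary kernels; the theorem is its special
   case for the Gaussian kernel, the standing assumption being unnecessary. *)

Lemma ln_le_mono x y : 0 < x -> x <= y -> ln x <= ln y.
Proof.
  intros Hx [Hlt | ->]; [left; apply ln_increasing; assumption | right; reflexivity].
Qed.

Lemma ln_le_sub1 y : 0 < y -> ln y <= y - 1.
Proof. intros Hy. pose proof (exp_ineq1_le (ln y)). rewrite exp_ln in H by exact Hy. lra. Qed.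

Lemma neg_ln_one_minus_le t : 0 <= t < 1 -> - ln (1 - t) <= t / (1 - t).
Proof.
  intros Ht. rewrite <- ln_Rinv by lra.
  replace (t / (1 - t)) with (/ (1 - t) - 1) by (field; lra).
  apply ln_le_sub1, Rinv_0_lt_compat; lra.
Qed.

(* Needed to bound the null log-likelihood, which is always >= -ln 2. *)
Lemma ln_2_le_1 : ln 2 <= 1.
Proof.
  rewrite <- (ln_exp 1). apply ln_le_mono; [lra|].
  pose proof (exp_ineq1_le 1). lra.
Qed.

Lemma sumB_ext B (f g : point -> R) :
  (forall x, In x B -> f x = g x) -> sumB B f = sumB B g.
Proof.
  induction B as [|b B IH]; intros H; unfold sumB in *; simpl; [reflexivity|].
  rewrite (H b (or_introl eq_refl)), (IH (fun x Hx => H x (or_intror Hx))). reflexivity.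
Qed.

Lemma sumB_const B a : sumB B (fun _ => a) = INR (length B) * a.
Proof.
  induction B as [|b B IH]; unfold sumB in *; simpl length; [simpl; lra|].
  rewrite S_INR; cbn [map fold_right]. rewrite IH. lra.
Qed.

Lemma sumB_lower_bound B (f g : point -> R) a :
  (forall x, In x B -> g x + a <= f x) -> sumB B g + INR (length B) * a <= sumB B f.
Proof.
  induction B as [|b B IH]; intros H; unfold sumB in *; simpl length; [simpl; lra|].
  rewrite S_INR; cbn [map fold_right].
  pose proof (H b (or_introl eq_refl)).
  pose proof (IH (fun x Hx => H x (or_intror Hx))). lra.
Qed.

Lemma length_pos (B : list point) : B <> nil -> 0 < INR (length B).
Proof.
  destruct B as [|b B]; [congruence|]. intros _.
  simpl length. rewrite S_INR. pose proof (pos_INR (length B)). lra.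
Qed.

Lemma gfun_in01 p q K x : in01 p -> in01 q -> 0 <= K x <= 1 -> in01 (gfun p q K x).
Proof. unfold in01, gfun. intros Hp Hq HK. split; nra. Qed.

Definition IsTruncation (B : list point) (t : R) (K K' : point -> R) : Prop :=
  forall x, In x B -> 0 <= K x <= 1 /\ (K' x = K x \/ (K' x = 0 /\ K x < t)).

Lemma truncation_range B t K K' :
  IsTruncation B t K K' -> forall x, In x B -> 0 <= K' x <= 1.
Proof. intros Htr x Hx. destruct (Htr x Hx) as [HK [-> | [-> _]]]; lra. Qed.

(* Pointwise comparison, truncated -> full kernel with the same (p,q):
   where K' = 0 the mixture only gains the term p k, and k < t costs at most
   a factor 1 - t on either probability. *)
Lemma mix_truncation_to_full p q k k' t :
  in01 p -> in01 q -> 0 <= k <= 1 -> 0 <= t -> (k' = k \/ (k' = 0 /\ k < t)) ->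
  (1 - t) * (p * k' + q * (1 - k')) <= p * k + q * (1 - k) /\
  (1 - t) * (1 - (p * k' + q * (1 - k'))) <= 1 - (p * k + q * (1 - k)).
Proof.
  unfold in01. intros Hp Hq Hk Ht [-> | [-> Hkt]].
  - assert (0 <= p * k + q * (1 - k) <= 1) by nra. split; nra.
  - split; nra.
Qed.

(* Pointwise comparison, full -> truncated kernel: shrinking by a = 1/(1+t)
   and moving the background rate to q' = a q + (1 - a) p absorbs the mass
   k < t that the truncation removes. *)
Lemma mix_full_to_truncation p q k k' t :
  in01 p -> in01 q -> 0 <= k <= 1 -> 0 <= t -> (k' = k \/ (k' = 0 /\ k < t)) ->
  let a := / (1 + t) in
  let q' := a * q + (1 - a) * p in
  a * (p * k + q * (1 - k)) <= p * k' + q' * (1 - k') /\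
  a * (1 - (p * k + q * (1 - k))) <= 1 - (p * k' + q' * (1 - k')).
Proof.
  intros Hp Hq Hk Ht Hk' a q'. unfold in01 in *.
  assert (Ha : 0 < a) by (apply Rinv_0_lt_compat; lra).
  assert (Hat : 1 - a = a * t) by (unfold a; field; lra).
  unfold q'. rewrite Hat.
  destruct Hk' as [-> | [-> Hkt]].
  - split.
    + assert (0 <= a * t * p) by (apply Rmult_le_pos; nra).
      assert (p * k + (a * q + a * t * p) * (1 - k) - a * (p * k + q * (1 - k))
              = a * t * p) by (rewrite <- Hat; ring). lra.
    + assert (0 <= a * t * (1 - p)) by (apply Rmult_le_pos; nra).
      assert (1 - (p * k + (a * q + a * t * p) * (1 - k)) - a * (1 - (p * k + q * (1 - k)))
              = a * t * (1 - p)) by (rewrite <- Hat; ring). lra.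
  - split.
    + assert (0 <= a * p * (t - k)) by (apply Rmult_le_pos; nra).
      assert (0 <= a * q * k) by (apply Rmult_le_pos; nra). nra.
    + assert (0 <= a * (1 - p) * (t - k)) by (apply Rmult_le_pos; nra).
      assert (0 <= a * (1 - q) * k) by (apply Rmult_le_pos; nra). nra.
Qed.

Section Likelihood.

Variable B : list point.
Variable m : point -> bool.
Hypothesis B_nonempty : B <> nil.

Lemma ell_compare K1 K2 p1 q1 p2 q2 c :
  0 < c ->
  (forall x, In x B -> c * gfun p1 q1 K1 x <= gfun p2 q2 K2 x /\
                       c * (1 - gfun p1 q1 K1 x) <= 1 - gfun p2 q2 K2 x) ->
  ell_finite B m p1 q1 K1 ->
  ell_finite B m p2 q2 K2 /\ ell B m p1 q1 K1 + ln c <= ell B m p2 q2 K2.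
Proof.
  intros Hc Hpt Hfin. split.
  - intros x Hx. specialize (Hpt x Hx). specialize (Hfin x Hx). destruct (m x); nra.
  - set (f1 := fun x => if m x then ln (gfun p1 q1 K1 x) else ln (1 - gfun p1 q1 K1 x)).
    set (f2 := fun x => if m x then ln (gfun p2 q2 K2 x) else ln (1 - gfun p2 q2 K2 x)).
    assert (Hsum : sumB B f1 + INR (length B) * ln c <= sumB B f2).
    { apply sumB_lower_bound. intros x Hx. specialize (Hpt x Hx). specialize (Hfin x Hx).
      unfold f1, f2. rewrite Rplus_comm.
      destruct (m x); rewrite <- ln_mult by lra; apply ln_le_mono; nra. }
    pose proof (length_pos B B_nonempty) as Hn.
    unfold ell; fold f1 f2.
    apply (Rmult_le_reg_l (INR (length B))); [exact Hn|].
    rewrite Rmult_plus_distr_l, <- !Rmult_assoc, Rinv_r by lra. lra.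
Qed.

Lemma max_ell_nonpos K L :
  (forall x, In x B -> 0 <= K x <= 1) -> IsMaxEll B m K L -> L <= 0.
Proof.
  intros HK [[p [q [Hp [Hq [Hfin <-]]]]] _].
  set (f := fun x => if m x then ln (gfun p q K x) else ln (1 - gfun p q K x)).
  assert (Hsum : sumB B f + INR (length B) * 0 <= sumB B (fun _ => 0)).
  { apply sumB_lower_bound. intros x Hx. specialize (Hfin x Hx).
    pose proof (gfun_in01 p q K x Hp Hq (HK x Hx)) as Hg. unfold in01 in Hg.
    unfold f. rewrite Rplus_0_r, <- ln_1. destruct (m x); apply ln_le_mono; lra. }
  rewrite sumB_const in Hsum.
  pose proof (Rinv_0_lt_compat _ (length_pos B B_nonempty)).
  unfold ell; fold f. nra.
Qed.

(* The null model is the special case p = q of the alternative, so the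
   maximum of l dominates the maximum of l0. *)
Lemma max_ell_ge_max_ell0 K L L0 : IsMaxEll B m K L -> IsMaxEll0 B m L0 -> L0 <= L.
Proof.
  intros [_ Hmax] [[q [Hq [Hfin <-]]] _].
  assert (Hconst : forall x, gfun q q K x = q) by (intros x; unfold gfun; ring).
  replace (ell0 B m q) with (ell B m q q K).
  - apply Hmax; [exact Hq | exact Hq |]. intros x Hx. rewrite Hconst. exact (Hfin x Hx).
  - unfold ell, ell0. f_equal. apply sumB_ext. intros x _. rewrite Hconst. reflexivity.
Qed.

Lemma max_ell0_unique L0 L0' : IsMaxEll0 B m L0 -> IsMaxEll0 B m L0' -> L0 = L0'.
Proof.
  intros [[q [Hq [Hf <-]]] Hmax] [[q' [Hq' [Hf' <-]]] Hmax'].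
  apply Rle_antisym; auto.
Qed.

(* Taking q = 1/2 shows max l0 >= -ln 2. *)
Lemma max_ell0_ge_neg_ln2 L0 : IsMaxEll0 B m L0 -> - ln 2 <= L0.
Proof.
  intros [_ Hmax].
  assert (Hhalf : ell0 B m (/ 2) <= L0).
  { apply Hmax; [unfold in01; lra|]. intros x _. destruct (m x); lra. }
  unfold ell0 in Hhalf.
  rewrite (sumB_ext B _ (fun _ => ln (/ 2))), sumB_const in Hhalf
    by (intros x _; destruct (m x); [reflexivity | f_equal; field]).
  pose proof (length_pos B B_nonempty).
  rewrite <- Rmult_assoc, Rinv_l, ln_Rinv in Hhalf by lra. lra.
Qed.

Lemma max_ell_truncation_le K K' t L L' :
  0 <= t < 1 -> IsTruncation B t K K' ->
  IsMaxEll B m K L -> IsMaxEll B m K' L' -> L' + ln (1 - t) <= L.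
Proof.
  intros Ht Htr [_ Hmax] [[p [q [Hp [Hq [Hfin <-]]]]] _].
  destruct (ell_compare K' K p q p q (1 - t)) as [Hfin' Hcmp];
    [lra | | exact Hfin |].
  - intros x Hx. destruct (Htr x Hx) as [HK Hrel]. unfold gfun.
    exact (mix_truncation_to_full p q (K x) (K' x) t Hp Hq HK (proj1 Ht) Hrel).
  - pose proof (Hmax p q Hp Hq Hfin'). lra.
Qed.

Lemma max_ell_le_truncation K K' t L L' :
  0 <= t -> IsTruncation B t K K' ->
  IsMaxEll B m K L -> IsMaxEll B m K' L' -> L - ln (1 + t) <= L'.
Proof.
  intros Ht Htr [[p [q [Hp [Hq [Hfin <-]]]]] _] [_ Hmax].
  set (a := / (1 + t)). set (q' := a * q + (1 - a) * p).
  assert (Ha : 0 < a <= 1).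
  { unfold a. split; [apply Rinv_0_lt_compat; lra|].
    rewrite <- Rinv_1. apply Rinv_le_contravar; lra. }
  assert (Hq' : in01 q').
  { unfold in01 in *. unfold q'. split; nra. }
  destruct (ell_compare K K' p q p q' a) as [Hfin' Hcmp];
    [lra | | exact Hfin |].
  - intros x Hx. destruct (Htr x Hx) as [HK Hrel]. unfold gfun.
    exact (mix_full_to_truncation p q (K x) (K' x) t Hp Hq HK Ht Hrel).
  - pose proof (Hmax p q' Hp Hq' Hfin'). unfold a in Hcmp.
    rewrite ln_Rinv in Hcmp by lra. lra.
Qed.

End Likelihood.

(* With a single point the null model fits perfectly. *)
Lemma max_ell0_singleton_nonneg b m L0 : IsMaxEll0 (b :: nil) m L0 -> 0 <= L0.
Proof.
  intros [_ Hmax].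
  assert (Hbest : ell0 (b :: nil) m (if m b then 1 else 0) <= L0).
  { apply Hmax; [unfold in01; destruct (m b); lra|].
    intros x [<- | []]. destruct (m b); lra. }
  unfold ell0, sumB in Hbest; simpl in Hbest.
  destruct (m b); [|rewrite Rminus_0_r in Hbest]; rewrite ln_1 in Hbest; lra.
Qed.

(* The gain of the truncated kernel is at most eps when t = eps/n: via
   -ln(1-t) if eps <= n - 1, and via max l(K') <= 0 <= max l(K) + ln 2
   (or + 0 when n = 1) otherwise. *)
Lemma truncation_gain_le B m K K' eps L L' L0 :
  B <> nil -> 0 < eps < INR (length B) ->
  IsTruncation B (eps / INR (length B)) K K' ->
  IsMaxEll B m K L -> IsMaxEll B m K' L' -> IsMaxEll0 B m L0 -> L' - L <= eps.
Proof.
  intros HB Heps Htr HL HL' HL0.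
  set (n := INR (length B)) in *.
  set (t := eps / n) in *.
  pose proof (length_pos B HB) as Hn; fold n in Hn.
  assert (HL0L : L0 <= L) by exact (max_ell_ge_max_ell0 B m K L L0 HL HL0).
  assert (HL'0 : L' <= 0)
    by exact (max_ell_nonpos B m HB K' L' (truncation_range B t K K' Htr) HL').
  destruct (Rle_lt_dec eps (n - 1)) as [Hsmall | Hlarge].
  - (* many points: the truncation loss -ln(1-t) is at most eps/(n-eps) <= eps *)
    assert (Ht : 0 <= t < 1).
    { unfold t. split; [apply Rlt_le, Rdiv_lt_0_compat; lra|].
      apply (Rmult_lt_reg_r n); [exact Hn|]. unfold Rdiv. rewrite Rmult_assoc, Rinv_l; lra. }
    pose proof (max_ell_truncation_le B m HB K K' t L L' Ht Htr HL HL').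
    pose proof (neg_ln_one_minus_le t Ht).
    assert (Hratio : t / (1 - t) = eps / (n - eps)) by (unfold t; field; lra).
    assert (eps / (n - eps) <= eps).
    { apply (Rmult_le_reg_r (n - eps)); [lra|].
      unfold Rdiv. rewrite Rmult_assoc, Rinv_l; nra. }
    lra.
  - destruct (Rle_lt_dec 1 eps) as [Hge1 | Hlt1].
    + pose proof (max_ell0_ge_neg_ln2 B m HB L0 HL0). pose proof ln_2_le_1. lra.
    + (* a single point: then L0 = 0 *)
      destruct B as [|b [|b' B']]; [congruence| |].
      * pose proof (max_ell0_singleton_nonneg b m L0 HL0). lra.
      * unfold n in Hlarge. simpl length in Hlarge. rewrite !S_INR in Hlarge.
        pose proof (pos_INR (length B')). lra.
Qed.

Lemma phi_truncation_bound B m K K' eps v v' :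
  B <> nil -> 0 < eps < INR (length B) ->
  IsTruncation B (eps / INR (length B)) K K' ->
  IsPhi B m K v -> IsPhi B m K' v' -> Rabs (v - v') <= eps.
Proof.
  intros HB Heps Htr [L [L0 [HL [HL0 ->]]]] [L' [L0' [HL' [HL0' ->]]]].
  rewrite (max_ell0_unique B m L0' L0 HL0' HL0).
  pose proof (length_pos B HB) as Hn.
  set (t := eps / INR (length B)) in *.
  assert (Ht : 0 <= t <= eps).
  { unfold t. split; [apply Rlt_le, Rdiv_lt_0_compat; lra|].
    apply (Rmult_le_reg_r (INR (length B))); [exact Hn|].
    unfold Rdiv. rewrite Rmult_assoc, Rinv_l by lra.
    destruct B as [|b B]; [congruence|]. simpl length. rewrite S_INR.
    pose proof (pos_INR (length B)). nra. }
  pose proof (max_ell_le_truncation B m HB K K' t L L' (proj1 Ht) Htr HL HL').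
  pose proof (ln_le_sub1 (1 + t) ltac:(lra)).
  pose proof (truncation_gain_le B m K K' eps L L' L0 HB Heps Htr HL HL' HL0).
  apply Rabs_le. lra.
Qed.

Lemma sqdist_nonneg x c : 0 <= sqdist x c.
Proof.
  revert c; induction x as [|a x IH]; intros [|b c];
    unfold sqdist; cbn [combine map fold_right fst snd]; try lra.
  pose proof (IH c) as H. unfold sqdist in H. pose proof (pow2_ge_0 (a - b)). lra.
Qed.

Lemma gaussK_range r c x : 0 < r -> 0 <= gaussK r c x <= 1.
Proof.
  intros Hr. unfold gaussK. split; [apply Rlt_le, exp_pos|].
  set (a := sqdist x c / r ^ 2).
  assert (Ha : 0 <= a).
  { apply Rmult_le_pos; [apply sqdist_nonneg|].
    apply Rlt_le, Rinv_0_lt_compat, pow_lt; exact Hr. }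
  replace (- sqdist x c / r ^ 2) with (- a) by (unfold a, Rdiv; ring).
  rewrite exp_Ropp, <- Rinv_1. apply Rinv_le_contravar; [lra|].
  pose proof (exp_ineq1_le a). lra.
Qed.

Lemma gaussK_lt_far r c x s :
  0 < r -> 0 < s <= 1 -> r * sqrt (ln (/ s)) < Defs.dist x c -> gaussK r c x < s.
Proof.
  intros Hr Hs Hfar.
  assert (Hl : 0 <= ln (/ s)).
  { rewrite <- ln_1. apply ln_le_mono; [lra|].
    rewrite <- Rinv_1. apply Rinv_le_contravar; lra. }
  assert (Hr2 : 0 < r ^ 2) by (apply pow_lt; exact Hr).
  assert (Hsq : r ^ 2 * ln (/ s) < sqdist x c).
  { apply sqrt_lt_0_alt. unfold Defs.dist in Hfar.
    rewrite sqrt_mult, sqrt_pow2 by lra. exact Hfar. }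
  unfold gaussK. rewrite <- (exp_ln s) by lra.
  apply exp_increasing.
  apply (Rmult_lt_reg_r (r ^ 2)); [exact Hr2|].
  rewrite ln_Rinv in Hsq by lra.
  unfold Rdiv. rewrite Rmult_assoc, Rinv_l by lra. lra.
Qed.

Lemma truncK_is_truncation B r c s :
  0 < r -> 0 < s <= 1 ->
  IsTruncation B s (gaussK r c) (truncK r (r * sqrt (ln (/ s))) c).
Proof.
  intros Hr Hs x _. split; [exact (gaussK_range r c x Hr)|].
  unfold truncK. destruct (Rle_dec (Defs.dist x c) (r * sqrt (ln (/ s)))) as [Hnear | Hfar].
  - left; reflexivity.
  - right. split; [reflexivity|]. apply gaussK_lt_far; [exact Hr | exact Hs | lra].
Qed.

(* With s = eps/n one has r sqrt(ln(1/s)) = rmax, so K'_c is an (eps/n)-truncation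
   of K_c and [phi_truncation_bound] applies. *)
Theorem lemmaA3 (d : nat) (B : list point) (m : point -> bool) (eps r : R) :
  B <> nil -> NoDup B -> (forall x, In x B -> length x = d) ->
  0 < eps -> eps < INR (length B) -> 0 < r ->
  forall c : point, length c = d ->
  let rmax := r * sqrt (ln (INR (length B) / eps)) in
  StandingAssumption B m (gaussK r c) ->
  StandingAssumption B m (truncK r rmax c) ->
  forall v1 v2, IsPhi B m (gaussK r c) v1 -> IsPhi B m (truncK r rmax c) v2 ->
  Rabs (v1 - v2) <= eps.
Proof.
  intros HB _ _ Heps Hepsn Hr c _ rmax _ _ v1 v2 Hphi1 Hphi2.
  pose proof (length_pos B HB) as Hn.
  assert (Hs : 0 < eps / INR (length B) <= 1).
  { split; [apply Rdiv_lt_0_compat; lra|].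
    apply (Rmult_le_reg_r (INR (length B))); [exact Hn|].
    unfold Rdiv. rewrite Rmult_assoc, Rinv_l; lra. }
  assert (Hrmax : rmax = r * sqrt (ln (/ (eps / INR (length B)))))
    by (unfold rmax; rewrite Rinv_div; reflexivity).
  rewrite Hrmax in Hphi2.
  exact (phi_truncation_bound B m _ _ eps v1 v2 HB (conj Heps Hepsn)
           (truncK_is_truncation B r c _ Hr Hs) Hphi1 Hphi2).
Qed.
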